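(* For all natural numbers $n,m$ there is a natural number $s_{n,m}$, depending only on $n$ and $m$, such that every structure $A$ which is either a pre-Lie ring or a left brace and satisfies $A^{(n)}=0$ and $A^{m}=0$ also satisfies $A^{[s_{n,m}]}=0$. Moreover, one can take $s_{n+1,m}\le s_{n,m}(m+1)$.
   Context: A (left) brace is a set $A$ with binary operations $+,\circ$ such that $(A,+)$ is an abelian group, $(A,\circ)$ is a group, and $a\circ(b+c)+a=a\circ b+a\circ c$; write $a*b=a\circ b-a-b$. A pre-Lie ring is an abelian group $(A,+)$ with a biadditive product $\cdot$ satisfying $(x\cdot y)\cdot z-x\cdot(y\cdot z)=(y\cdot x)\cdot z-y\cdot(x\cdot z)$. Let $\star$ denote $*$ for braces and $\cdot$ for pre-Lie rings; for additive subgroups $X,Y$, $X\star Y$ is the additive subgroup generated by $\{x\star y\}$. Set $A^1=A^{(1)}=A^{[1]}=A$, $A^{i+1}=A\star A^i$, $A^{(i+1)}=A^{(i)}\star A$, $A^{[i+1]}=\sum_{j=1}^{i}A^{[j]}\star A^{[i+1-j]}$. *)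

From HB Require Import structures.
From mathcomp Require Import all_boot all_order all_algebra.
Set Implicit Arguments. Unset Strict Implicit. Unset Printing Implicit Defensive.
Import GRing.Theory.
Local Open Scope ring_scope.

Definition subset_of (V : Type) := V -> Prop.

Inductive addgen (V : zmodType) (S : V -> Prop) : V -> Prop :=
| addgen_in x : S x -> addgen S x
| addgen_0 : addgen S 0
| addgen_add x y : addgen S x -> addgen S y -> addgen S (x + y)
| addgen_opp x : addgen S x -> addgen S (- x).

Section Series.
Variables (V : zmodType) (star : V -> V -> V).

Definition starset (X Y : V -> Prop) : V -> Prop :=
  addgen (fun z => exists x y, X x /\ Y y /\ z = star x y).

Definition fullset : V -> Prop := fun _ => True.

(* A^1 = A, A^{i+1} = A star A^i   (index 0 is a dummy, set to A) *)
Fixpoint lpow (i : nat) : V -> Prop :=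
  match i with
  | 0%N => fullset
  | S i' => match i' with
            | 0%N => fullset
            | _ => starset fullset (lpow i')
            end
  end.

(* A^(1) = A, A^(i+1) = A^(i) star A   (index 0 is a dummy, set to A) *)
Fixpoint rpow (i : nat) : V -> Prop :=
  match i with
  | 0%N => fullset
  | S i' => match i' with
            | 0%N => fullset
            | _ => starset (rpow i') fullset
            end
  end.

(* brk_upto n k = A^[k] for 1 <= k <= n; computed by course-of-values
   recursion: A^[1] = A and, for k >= 2,
   A^[k] = sum_{j=1}^{k-1} A^[j] star A^[k-j]
   (a sum of additive subgroups = the subgroup generated by their union). *)
Fixpoint brk_upto (n : nat) : nat -> V -> Prop :=
  match n with
  | 0%N => fun _ => fullset
  | S n' => fun k =>
      if (k <= n')%N then brk_upto n' k
      else if k == 1%N then fullset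
      else addgen (fun z => exists j, (1 <= j < k)%N /\
                     starset (brk_upto n' j) (brk_upto n' (k - j)) z)
  end.

Definition bpow (k : nat) : V -> Prop := brk_upto k k.

Definition is_zero_set (X : V -> Prop) : Prop := forall x, X x -> x = 0.

End Series.

Definition is_left_brace (V : zmodType) (circ : V -> V -> V) : Prop :=
  (forall a b c, circ a (circ b c) = circ (circ a b) c) /\
  (exists e : V, (forall a, circ e a = a /\ circ a e = a) /\
                 (forall a, exists b, circ a b = e /\ circ b a = e)) /\
  (forall a b c, circ a (b + c) + a = circ a b + circ a c).

Definition brace_star (V : zmodType) (circ : V -> V -> V) (a b : V) : V :=
  circ a b - a - b.

Definition is_prelie_ring (V : zmodType) (dot : V -> V -> V) : Prop :=
  (forall x y z, dot (x + y) z = dot x z + dot y z) /\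
  (forall x y z, dot x (y + z) = dot x y + dot x z) /\
  (forall x y z, dot (dot x y) z - dot x (dot y z) = dot (dot y x) z - dot y (dot x z)).

Definition nilp_implies (V : zmodType) (star : V -> V -> V) (n m s : nat) : Prop :=
  is_zero_set (rpow star n) -> is_zero_set (lpow star m) -> is_zero_set (bpow star s).

From mathcomp Require Import all_boot all_order all_algebra.
From mathcomp Require Import zify.
Set Implicit Arguments. Unset Strict Implicit. Unset Printing Implicit Defensive.
Import GRing.Theory.
Local Open Scope ring_scope.

(* Take s(n, m) = m ^ n.  Both in a brace and in a pre-Lie ring, every
   A^(p) is a left ideal and a * _ is additive.  Splitting a generator of
   A^[l] as u * v with u in A^[j] and v in A^[l - j], either u already lies
   in A^(n) (when j >= m^n), so u * v lies in A^(n+1), or v is handled by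
   induction and absorbs one more left factor.  Hence, if A^[l] lies in
   A^(n) for l >= m^n, then A^[l] lies in A^(n+1) + A^{r+1} for
   l > m^n r; with r = m - 1 and A^m = 0 this gives A^[m^(n+1)] in A^(n+1). *)

Definition is_subgroup (V : zmodType) (X : V -> Prop) :=
  [/\ X 0, forall x y, X x -> X y -> X (x + y) & forall x, X x -> X (- x)].

Lemma addgen_subgroup (V : zmodType) (S : V -> Prop) : is_subgroup (addgen S).
Proof. by split; [exact: addgen_0 | exact: addgen_add | exact: addgen_opp]. Qed.

Lemma fullset_subgroup (V : zmodType) : is_subgroup (@fullset V).
Proof. by []. Qed.

Lemma addgen_min (V : zmodType) (S T : V -> Prop) :
  is_subgroup T -> (forall x, S x -> T x) -> forall x, addgen S x -> T x.
Proof. by case=> T0 TD TN ST x; elim => //; auto. Qed.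

Lemma morphD_eq0 (U W : zmodType) (f : U -> W) :
  {morph f : x y / x + y} -> f 0 = 0.
Proof. by move=> fD; apply: (addrI (f 0)); rewrite -fD !addr0. Qed.

Lemma morphD_N (U W : zmodType) (f : U -> W) :
  {morph f : x y / x + y} -> {morph f : x / - x}.
Proof. by move=> fD x; apply/eqP; rewrite -addr_eq0 -fD addNr (morphD_eq0 fD). Qed.

Lemma addgen_map (U W : zmodType) (f : U -> W) (S : U -> Prop) (T : W -> Prop) :
  {morph f : x y / x + y} -> is_subgroup T -> (forall x, S x -> T (f x)) ->
  forall x, addgen S x -> T (f x).
Proof.
move=> fD [T0 TD TN] ST x; elim => {x} [x /ST | | x y _ Tx _ Ty | x _ Tx] //.
- by rewrite (morphD_eq0 fD).
- by rewrite fD; apply: TD.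
- by rewrite (morphD_N fD); apply: TN.
Qed.

Section Series.
Variables (V : zmodType) (star : V -> V -> V).

Lemma rpow_subgroup p : is_subgroup (rpow star p).
Proof.
by case: p => [|[|p]]; [exact: fullset_subgroup.. | exact: addgen_subgroup].
Qed.

Lemma lpow_subgroup p : is_subgroup (lpow star p).
Proof.
by case: p => [|[|p]]; [exact: fullset_subgroup.. | exact: addgen_subgroup].
Qed.

Lemma rpowS p :
  (0 < p)%N -> rpow star p.+1 = starset star (rpow star p) (@fullset V).
Proof. by case: p. Qed.

Lemma lpowS p :
  (0 < p)%N -> lpow star p.+1 = starset star (@fullset V) (lpow star p).
Proof. by case: p. Qed.

Lemma rpow_star p x y : (0 < p)%N -> rpow star p x -> rpow star p.+1 (star x y).
Proof. by move=> p_gt0 Xx; rewrite rpowS //; apply: addgen_in; exists x, y. Qed.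

Lemma lpow_star p x y : (0 < p)%N -> lpow star p y -> lpow star p.+1 (star x y).
Proof. by move=> p_gt0 Yy; rewrite lpowS //; apply: addgen_in; exists x, y. Qed.

Lemma starsetSl (X X' Y : V -> Prop) : (forall x, X x -> X' x) ->
  forall z, starset star X Y z -> starset star X' Y z.
Proof.
move=> XX'; apply: addgen_min; first exact: addgen_subgroup.
by move=> _ [x [y [Xx [Yy ->]]]]; apply: addgen_in; exists x, y; auto.
Qed.

Lemma rpow_decr p x : rpow star p.+1 x -> rpow star p x.
Proof.
elim: p x => [|[|p] IH] x //.
by rewrite rpowS // [rpow _ p.+2]rpowS //; apply: starsetSl; exact: IH.
Qed.

Lemma brk_upto_stable n k : (k <= n)%N -> brk_upto star n k = bpow star k.
Proof.
elim: n => [|n IH] le_kn; first by move: le_kn; rewrite leqn0 => /eqP ->.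
case: (leqP k n) => [le_kn' | lt_nk]; first by rewrite /= le_kn' IH.
by have -> : k = n.+1 by apply/eqP; rewrite eqn_leq le_kn lt_nk.
Qed.

Lemma bpow_split k x : (1 < k)%N -> bpow star k x ->
  addgen (fun z => exists j, (0 < j < k)%N /\
                     starset star (bpow star j) (bpow star (k - j)) z) x.
Proof.
case: k => [|k] //= k_gt1; rewrite /bpow /= ltnn.
have -> : (k.+1 == 1%N) = false by case: k k_gt1.
apply: addgen_min; first exact: addgen_subgroup.
move=> z [j [/andP [j_gt0 lt_jk] Zz]]; apply: addgen_in; exists j.
by rewrite !brk_upto_stable in Zz; [rewrite j_gt0 lt_jk | lia..].
Qed.

Definition addset (X Y : V -> Prop) : V -> Prop :=
  fun z => exists x y, X x /\ Y y /\ z = x + y.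

Lemma addset_subgroup X Y :
  is_subgroup X -> is_subgroup Y -> is_subgroup (addset X Y).
Proof.
case=> X0 XD XN [Y0 YD YN]; split; first by exists 0, 0; rewrite addr0.
- move=> _ _ [x1 [y1 [X1 [Y1 ->]]]] [x2 [y2 [X2 [Y2 ->]]]].
  by exists (x1 + x2), (y1 + y2); rewrite addrACA; auto.
- by move=> _ [x [y [Xx [Yy ->]]]]; exists (- x), (- y); rewrite opprD; auto.
Qed.

Hypothesis star_additive : forall a, {morph star a : x y / x + y}.
Hypothesis rpow_left_ideal : forall p a x, rpow star p x -> rpow star p (star a x).

Section Nilpotent.
Variable m : nat.
Hypothesis m_gt0 : (0 < m)%N.
Hypothesis lpow_m_eq0 : is_zero_set (lpow star m).

Lemma bpow_sub_addset n : (0 < n)%N ->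
  (forall l x, (m ^ n <= l)%N -> bpow star l x -> rpow star n x) ->
  forall r l x, (m ^ n * r < l)%N -> bpow star l x ->
    addset (rpow star n.+1) (lpow star r.+1) x.
Proof.
move=> n_gt0 bpow_rpow_n; have mn_gt0 : (0 < m ^ n)%N by rewrite expn_gt0 m_gt0.
have target_subgroup r : is_subgroup (addset (rpow star n.+1) (lpow star r)).
  by apply: addset_subgroup; [exact: rpow_subgroup | exact: lpow_subgroup].
elim => [|r IH] l x lt_l Bx.
  by exists 0, x; rewrite add0r; split; first by case: (rpow_subgroup n.+1).
have l_gt1 : (1 < l)%N by nia.
move: (bpow_split l_gt1 Bx).
apply: addgen_min => // z [j [/andP [j_gt0 lt_jl]]]; apply: addgen_min => //.
move=> _ [u [v [Bu [Bv ->]]]]; case: (leqP (m ^ n) j) => [le_j | lt_j].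
  exists (star u v), 0; rewrite addr0; split.
    exact/rpow_star/(bpow_rpow_n _ _ le_j Bu).
  by split => //; case: (lpow_subgroup r.+2).
have [a [b [Ra [Lb ->]]]] : addset (rpow star n.+1) (lpow star r.+1) v.
  by apply: (IH (l - j)%N) Bv; nia.
exists (star u a), (star u b).
split; first exact: rpow_left_ideal.
by split; [exact: lpow_star | exact: star_additive].
Qed.

Lemma bpow_sub_rpow n l x : (m ^ n <= l)%N -> bpow star l x -> rpow star n x.
Proof.
elim: n l x => [|[|n] IH] l x // le_l Bx.
have lt_l : (m ^ n.+1 * m.-1 < l)%N.
  by move: le_l; rewrite expnS; case: m m_gt0 (expn_gt0 m n.+1) => // m' _; nia.
have [a [b [Ra [Lb ->]]]] := bpow_sub_addset (isT : (0 < n.+1)%N) IH lt_l Bx.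
by move: Lb; rewrite prednK // => /lpow_m_eq0 ->; rewrite addr0.
Qed.

End Nilpotent.

Lemma nilp_implies_expn n m : (0 < m)%N -> nilp_implies star n m (m ^ n).
Proof.
move=> m_gt0 rpow_eq0 lpow_eq0 x Bx.
exact/rpow_eq0/(bpow_sub_rpow m_gt0 lpow_eq0 (leqnn _) Bx).
Qed.

End Series.

Section PreLie.
Variables (V : zmodType) (dot : V -> V -> V).
Hypothesis prelie : is_prelie_ring dot.

Lemma prelie_additive a : {morph dot a : x y / x + y}.
Proof. by case: prelie => _ [dotD _] x y; exact: dotD. Qed.

Lemma prelie_rpow_left_ideal p a x : rpow dot p x -> rpow dot p (dot a x).
Proof.
elim: p a x => [|[|p] IH] a x //; rewrite {1}rpowS //.
apply: addgen_map; [exact: prelie_additive | exact: rpow_subgroup |].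
move=> _ [y [z [Ry [_ ->]]]]; have [_ RD RN] := rpow_subgroup dot p.+2.
have -> : dot a (dot y z) = dot (dot a y) z - dot (dot y a) z + dot y (dot a z).
  case: prelie => _ [_ /(_ a y z) prelie_aj].
  by rewrite -addrA [- _ + _]addrC -opprB -prelie_aj subKr.
apply: (RD); [apply: RD | exact: rpow_star].
- exact/rpow_star/IH.
- exact/RN/rpow_star/rpow_decr/rpow_star.
Qed.

End PreLie.

Section Brace.
Variables (V : zmodType) (o : V -> V -> V).
Hypothesis brace : is_left_brace o.

Lemma brace_assoc a b c : o a (o b c) = o (o a b) c.
Proof. by case: brace. Qed.

Lemma brace_distr a b c : o a (b + c) + a = o a b + o a c.
Proof. by case: brace => _ []. Qed.

Lemma brace_neutral_eq0 e : (forall a, o e a = a) -> e = 0.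
Proof. by move=> eo; have := brace_distr e 0 0; rewrite !eo !addr0 add0r. Qed.

Lemma brace_o0 a : o a 0 = a.
Proof.
case: brace => _ [[e [eo _]] _].
by rewrite -(brace_neutral_eq0 (fun b => (eo b).1)); case: (eo a).
Qed.

Lemma brace_inv a : exists b, o a b = 0 /\ o b a = 0.
Proof.
case: brace => _ [[e [eo inv]] _].
by rewrite -(brace_neutral_eq0 (fun b => (eo b).1)); exact: inv.
Qed.

Definition lambda a x := o a x - a.

Lemma lambdaD a : {morph lambda a : x y / x + y}.
Proof.
by move=> x y; rewrite /lambda -[o a (x + y)](addrK a) brace_distr addrACA addrA.
Qed.

Lemma lambdaB a x y : lambda a (x - y) = lambda a x - lambda a y.
Proof. by rewrite lambdaD (morphD_N (lambdaD a)). Qed.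

Lemma lambda_comp a b x : lambda a (lambda b x) = lambda (o a b) x.
Proof.
by rewrite [lambda b x]/lambda lambdaB /lambda brace_assoc opprB addrA subrK.
Qed.

Lemma brace_starE x y : brace_star o x y = lambda x y - y.
Proof. by rewrite /brace_star /lambda addrAC. Qed.

Lemma brace_star_additive a : {morph brace_star o a : x y / x + y}.
Proof. by move=> x y; rewrite !brace_starE lambdaD opprD addrACA. Qed.

(* With b the inverse of a and c = a o y o b, the action property gives
   lambda a (y * z) = lambda (c o a) z - lambda a z = c * lambda a z,
   and c is rewritten additively as the bracketed sum. *)
Lemma lambda_brace_star a b y z : o a b = 0 -> o b a = 0 ->
  lambda a (brace_star o y z) =
  brace_star o (lambda a y + lambda a (brace_star o y b)) (lambda a z).
Proof.
move=> ab0 ba0; set c := _ + _.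
have c_def : c = o (o a y) b.
  rewrite /c brace_starE lambdaB lambda_comp.
  have -> : lambda a b = - a by rewrite /lambda ab0 sub0r.
  by rewrite opprK /lambda addrCA !subrK.
have ca : o c a = o a y by rewrite c_def -!brace_assoc ba0 brace_o0.
by rewrite !brace_starE lambdaB !lambda_comp ca.
Qed.

Lemma lambda_rpow p a x :
  rpow (brace_star o) p x -> rpow (brace_star o) p (lambda a x).
Proof.
elim: p a x => [|[|p] IH] a x //; rewrite {1}rpowS //.
apply: addgen_map; [exact: lambdaD | exact: rpow_subgroup |].
move=> _ [y [z [Ry [_ ->]]]]; have [b [ab0 ba0]] := brace_inv a.
rewrite (lambda_brace_star _ _ ab0 ba0); apply: rpow_star => //.
have [_ RD _] := rpow_subgroup (brace_star o) p.+1.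
by apply: RD; apply: IH => //; apply/rpow_decr/rpow_star.
Qed.

Lemma brace_rpow_left_ideal p a x :
  rpow (brace_star o) p x -> rpow (brace_star o) p (brace_star o a x).
Proof.
move=> Rx; have [_ RD RN] := rpow_subgroup (brace_star o) p.
by rewrite brace_starE; apply: RD; [exact: lambda_rpow | exact: RN].
Qed.

End Brace.

Theorem theorem18 :
  exists s : nat -> nat -> nat,
    (forall n m : nat, (0 < n)%N -> (0 < m)%N ->
       (forall (V : zmodType) (circ : V -> V -> V),
          is_left_brace circ -> nilp_implies (brace_star circ) n m (s n m)) /\
       (forall (V : zmodType) (dot : V -> V -> V),
          is_prelie_ring dot -> nilp_implies dot n m (s n m))) /\
    (forall n m : nat, (0 < n)%N -> (0 < m)%N ->
       (s n.+1 m <= s n m * m.+1)%N).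
Proof.
exists (fun n m => m ^ n)%N; split => [n m _ m_gt0 | n m _ _]; last first.
  by rewrite expnS mulnC leq_mul2l ltnW ?orbT.
split => [V circ brace | V dot prelie].
- exact: (nilp_implies_expn (brace_star_additive brace)
    (brace_rpow_left_ideal brace) (n := n) m_gt0).
- exact: (nilp_implies_expn (prelie_additive prelie)
    (prelie_rpow_left_ideal prelie) (n := n) m_gt0).
Qed.
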